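(* The proportional fair cost sharing mechanism, given by $f_{i,e}(p)=\frac{w_i(e)}{l_e^p}F_e(l_e^p)$ for $e\in p_i$ and $f_{i,e}(p)=0$ otherwise, is REP-expanded.
   Context: GND instance: finite resource set $E$; players $i \in [N]$ with strategy collections $P_i \subseteq 2^E$ and weight vectors $w_i \in \mathbb{Z}_{\geq 1}^E$; constants $q\in\mathbb{Z}_{\ge1}$, $\alpha_1,\dots,\alpha_q > 1$; for each $e$, $\sigma_e \geq 0$, $\xi_{e,j} \geq 0$ (at least one positive), and $F_e(0)=0$, $F_e(l)=\sigma_e+\sum_j \xi_{e,j} l^{\alpha_j}$ for $l>0$. Profile $p=(p_1,\dots,p_N)$, $p_i\in P_i$; load $l_e^p=\sum_{i: e\in p_i} w_i(e)$. A cost sharing mechanism $M=\{f_{i,e}\}$ is REP-expanded if for each $j\in[q]$ there are a nonnegative integer $K_j$ and nonnegative constants $x_{k,j}\in[0,\alpha_j-1]$, $y_{k,j}\in[1,\alpha_j]$, $z_{k,j}$ ($k\in[K_j]$), depending only on $\alpha_j$, with $x_{k,j}+y_{k,j}=\alpha_j$, such that for every profile $p$, player $i$ and resource $e\in p_i$: $$f_{i,e}(p)\le \sigma_e+\sum_{j\in[q]}\xi_{e,j}\sum_{k=1}^{K_j} z_{k,j}\,(l_e^p-w_i(e))^{x_{k,j}}(w_i(e))^{y_{k,j}}.$$ *)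

From HB Require Import structures.
From mathcomp Require Import all_boot all_order all_algebra.
From mathcomp Require Import all_classical all_reals all_analysis.
Set Implicit Arguments. Unset Strict Implicit. Unset Printing Implicit Defensive.
Import Order.TTheory GRing.Theory Num.Theory.
Local Open Scope ring_scope.

Record GND (R : realType) := MkGND {
  gE : finType;
  gN : nat;
  gP : 'I_gN -> {set {set gE}};
  gw : 'I_gN -> gE -> nat;
  gq : nat;
  galpha : 'I_gq -> R;
  gsigma : gE -> R;
  gxi : gE -> 'I_gq -> R
}.
Arguments gE {R} g.
Arguments gN {R} g.
Arguments gP {R} g _.
Arguments gw {R} g _ _.
Arguments gq {R} g.
Arguments galpha {R} g _.
Arguments gsigma {R} g _.
Arguments gxi {R} g _ _.

Definition GND_valid (R : realType) (G : GND R) : Prop :=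
  (0 < gq G)%N /\
  (forall j, 1 < galpha G j) /\
  (forall i e, (1 <= gw G i e)%N) /\
  (forall e, 0 <= gsigma G e) /\
  (forall e j, 0 <= gxi G e j) /\
  (forall e, exists j, 0 < gxi G e j).

Definition is_profile (R : realType) (G : GND R) (p : 'I_(gN G) -> {set gE G}) :=
  forall i, p i \in gP G i.

Definition load (R : realType) (G : GND R) (p : 'I_(gN G) -> {set gE G}) (e : gE G) : nat :=
  (\sum_(i < gN G | e \in p i) gw G i e)%N.

Definition Fcost (R : realType) (G : GND R) (e : gE G) (l : R) : R :=
  if l == 0 then 0
  else gsigma G e + \sum_(j < gq G) gxi G e j * l `^ galpha G j.

Arguments Fcost {R} G e l.

Definition mechanism (R : realType) :=
  forall G : GND R, ('I_(gN G) -> {set gE G}) -> 'I_(gN G) -> gE G -> R.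

(* REP-expanded: K_j, x_{k,j}, y_{k,j}, z_{k,j} are functions of alpha_j only. *)
Definition REP_expanded (R : realType) (M : mechanism R) : Prop :=
  exists (K : R -> nat) (x y z : R -> nat -> R),
    (forall a : R, 1 < a -> forall k, (k < K a)%N ->
       [/\ 0 <= x a k <= a - 1, 1 <= y a k <= a, 0 <= z a k & x a k + y a k = a])
    /\
    (forall G : GND R, GND_valid G ->
     forall p, is_profile p ->
     forall (i : 'I_(gN G)) (e : gE G), e \in p i ->
       M G p i e <=
         gsigma G e +
         \sum_(j < gq G) gxi G e j *
           \sum_(k < K (galpha G j))
             z (galpha G j) k
             * (((load p e)%:R - (gw G i e)%:R) `^ x (galpha G j) k)
             * (((gw G i e)%:R) `^ y (galpha G j) k)).

Definition prop_fair (R : realType) : mechanism R :=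
  fun G p i e =>
    if e \in p i then
      (gw G i e)%:R / (load p e)%:R * Fcost G e (load p e)%:R
    else 0.

From mathcomp Require Import all_boot all_order all_algebra.
From mathcomp Require Import all_classical all_reals all_analysis.
From mathcomp Require Import ring lra.
Set Implicit Arguments. Unset Strict Implicit.
Import Order.TTheory GRing.Theory Num.Theory.
Local Open Scope ring_scope.

(* With l the load and w the weight of player i, its proportional share of
   the term l^a is w l^(a-1) = w ((l - w) + w)^(a-1), and
   (u + v)^b <= 2^b (u^b + v^b) bounds this by
   2^(a-1) ((l - w)^(a-1) w + w^a): a REP expansion with two terms.
   The share of the constant sigma is at most sigma since w <= l. *)

Lemma powRD_le_2powR (R : realType) (u v b : R) : 0 <= u -> 0 <= v -> 0 <= b ->
  (u + v) `^ b <= 2 `^ b * (u `^ b + v `^ b).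
Proof.
move=> u_ge0 v_ge0 b_ge0.
wlog le_uv : u v u_ge0 v_ge0 / u <= v.
  move=> wlog_uv; have [/wlog_uv|/ltW/wlog_uv] := leP u v; first exact.
  by rewrite addrC [u `^ b + _]addrC; apply.
apply: (@le_trans _ _ ((2 * v) `^ b)).
  by apply: ge0_ler_powR; rewrite ?nnegrE; lra.
by rewrite powRM // ler_wpM2l ?powR_ge0 // lerDr powR_ge0.
Qed.

Lemma prop_share_powR_le (R : realType) (w l a : R) :
  0 <= w <= l -> 0 < l -> 1 <= a ->
  w / l * l `^ a <= 2 `^ (a - 1) * ((l - w) `^ (a - 1) * w + w `^ a).
Proof.
move=> /andP[w_ge0 le_wl] l_gt0 a_ge1.
have share_powR : w / l * l `^ a = w * (l - w + w) `^ (a - 1).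
  rewrite subrK -(mulr_powRB1 (ltW l_gt0)); last lra.
  by rewrite mulrA divfK // gt_eqF.
have -> : 2 `^ (a - 1) * ((l - w) `^ (a - 1) * w + w `^ a) =
          w * (2 `^ (a - 1) * ((l - w) `^ (a - 1) + w `^ (a - 1))).
  by rewrite -(mulr_powRB1 w_ge0); [ring | lra].
by rewrite share_powR ler_wpM2l // powRD_le_2powR //; lra.
Qed.

Lemma weight_le_load (R : realType) (G : GND R) (p : 'I_(gN G) -> {set gE G})
    (i : 'I_(gN G)) (e : gE G) :
  e \in p i -> (gw G i e <= load p e)%N.
Proof. by move=> e_pi; rewrite /load (bigD1 i) //= leq_addr. Qed.

Theorem lemma6p2 (R : realType) : REP_expanded (@prop_fair R).
Proof.
exists (fun _ => 2%N), (fun a k => if k == 0%N then a - 1 else 0),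
  (fun a k => if k == 0%N then 1 else a), (fun a _ => 2 `^ (a - 1)).
split.
  by move=> a a_gt1 [|k] _ /=; split; rewrite ?powR_ge0 //;
  try (apply/andP; split); lra.
move=> G [_ [alpha_gt1 [w_ge1 [sigma_ge0 [xi_ge0 _]]]]] p _ i e e_pi.
have := weight_le_load e_pi; rewrite -(ler_nat R) => le_wl.
have w_ge1i := w_ge1 i e; rewrite -(ler_nat R) in w_ge1i.
set w := (gw G i e)%:R in le_wl w_ge1i *; set l := (load p e)%:R in le_wl *.
have l_gt0 : 0 < l by lra.
rewrite /prop_fair e_pi /Fcost (gt_eqF l_gt0) mulrDr mulr_sumr lerD //.
  by rewrite ler_piMl // ler_pdivrMr // mul1r.
apply: ler_sum => j _; rewrite mulrCA ler_wpM2l //.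
rewrite big_ord_recl big_ord1 /= powRr1 // powRr0 mulr1 -mulrA -mulrDr.
by apply: prop_share_powR_le => //; [apply/andP; lra | apply/ltW/alpha_gt1].
Qed.
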